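(* Let $k\ge1$. For a coloring matrix $A$, let $\widehat{A}$ (the blowup of $A$) be the block matrix obtained by replacing every entry $1$ of $A$ by the $k\times k$ all-ones matrix and every entry $0$ by the $k\times k$ all-zeros matrix. If $A$ and $B$ are tree coloring equivalent, then so are $\widehat{A}$ and $\widehat{B}$; and if $A$ and $B$ are strictly tree coloring equivalent, then so are $\widehat{A}$ and $\widehat{B}$. Moreover, $t_{\widehat{A}}(n)=k^n t_A(n)$ for all $n\ge1$.
   Context: A plane tree is an unlabeled rooted tree in which the children of every vertex are linearly ordered. A coloring matrix is an $m\times m$ matrix $A=(a_{ij})$ with entries in $\{0,1\}$. An $A$-coloring of a plane tree assigns to each vertex a color in $\{1,\dots,m\}$ such that whenever a vertex of color $j$ is a child of a vertex of color $i$, $a_{ij}=1$. Let $t_A(n)$ be the number of pairs (plane tree with $n$ vertices, $A$-coloring of it) and $t_A^{(i)}(n)$ the number of those with root color $i$. Two coloring matrices $A,B$ of the same size are tree coloring equivalent if $t_A(n)=t_B(n)$ for all $n\ge1$, and strictly tree coloring equivalent if $t_A^{(i)}(n)=t_B^{(i)}(n)$ for all $n\ge1$ and all $i$. *)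

From Stdlib Require Import List.
From mathcomp Require Import all_boot all_order all_algebra.
Set Implicit Arguments. Unset Strict Implicit. Unset Printing Implicit Defensive.

Inductive ptree : Type := PNode of seq ptree.

Fixpoint nverts (t : ptree) : nat :=
  let: PNode ts := t in (sumn (map nverts ts)).+1.

(* A plane tree together with a coloring of its vertices by colors in 'I_m
   (color 1..m of the paper is 'I_m here). *)
Inductive ctree (m : nat) : Type := CNode of 'I_m & seq (ctree m).

Definition croot (m : nat) (c : ctree m) : 'I_m := let: CNode i _ := c in i.

Fixpoint shape (m : nat) (c : ctree m) : ptree :=
  let: CNode _ cs := c in PNode (map (@shape m) cs).

(* A coloring matrix is an m x m 0/1 matrix, here with boolean entries
   (true = 1).  A coloring is an A-coloring iff every child of a vertex of
   color i has a color j with a_ij = 1. *)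
Fixpoint valid (m : nat) (A : 'M[bool]_m) (c : ctree m) : bool :=
  let: CNode i cs := c in all (fun d => A i (croot d) && valid A d) cs.

Definition ncount (T : Type) (P : T -> Prop) (N : nat) : Prop :=
  exists l : seq T, List.NoDup l /\ (forall x, P x <-> List.In x l) /\ size l = N.

Definition tcount (m : nat) (A : 'M[bool]_m) (n N : nat) : Prop :=
  ncount (fun p : ptree * ctree m =>
            [/\ shape p.2 = p.1, nverts p.1 = n & valid A p.2]) N.

Definition tcount_root (m : nat) (A : 'M[bool]_m) (i : 'I_m) (n N : nat) : Prop :=
  ncount (fun p : ptree * ctree m =>
            [/\ shape p.2 = p.1, nverts p.1 = n, valid A p.2 & croot p.2 = i]) N.

Definition tc_equiv (m : nat) (A B : 'M[bool]_m) : Prop :=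
  forall n, 1 <= n -> forall N, tcount A n N <-> tcount B n N.

Definition strict_tc_equiv (m : nat) (A B : 'M[bool]_m) : Prop :=
  forall n, 1 <= n -> forall (i : 'I_m) N, tcount_root A i n N <-> tcount_root B i n N.

(* Blowup: index x of 'I_(m * k) lies in block x %/ k. *)
Lemma blk_lt (m k : nat) (x : 'I_(m * k)) : x %/ k < m.
Proof.
case: k x => [|k] x; first by case: x => /= x; rewrite muln0.
by rewrite ltn_divLR // (ltn_ord x).
Qed.

Definition blk (m k : nat) (x : 'I_(m * k)) : 'I_m := Ordinal (blk_lt x).

Definition blowup (m k : nat) (A : 'M[bool]_m) : 'M[bool]_(m * k) :=
  \matrix_(x, y) A (blk x) (blk y).

From HB Require Import structures.
From mathcomp Require Import all_boot all_order all_algebra.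
Set Implicit Arguments. Unset Strict Implicit. Unset Printing Implicit Defensive.

(* Collapsing every colour x of the blowup to its block x %/ k turns
   blowup-colourings of a plane tree into A-colourings of the same tree, as
   the blowup of A has entry A (x %/ k) (y %/ k) at (x, y).  Conversely an
   A-colouring is lifted by choosing, independently at each vertex, one of the
   k colours of the block of its colour, so it has exactly k ^ n preimages
   when the tree has n vertices, and k ^ n.-1 preimages with a prescribed root
   colour.  Hence t_blowup(n) = k ^ n * t_A(n) and
   t_blowup^(x)(n) = k ^ n.-1 * t_A^(x %/ k)(n), and both equivalences
   transfer to the blowups. *)

Lemma ptree_ind_in (P : ptree -> Prop) :
  (forall ts, (forall t, List.In t ts -> P t) -> P (PNode ts)) -> forall t, P t.
Proof.
move=> IH; fix F 1 => -[ts]; apply: IH.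
elim: ts => [|t ts IHts] u /=; first by case.
by case=> [<-|]; [exact: F | exact: IHts].
Qed.

Lemma ctree_ind_in m (P : ctree m -> Prop) :
  (forall i cs, (forall c, List.In c cs -> P c) -> P (CNode i cs)) -> forall c, P c.
Proof.
move=> IH; fix F 1 => -[i cs]; apply: IH.
elim: cs => [|c cs IHcs] d /=; first by case.
by case=> [<-|]; [exact: F | exact: IHcs].
Qed.

Fixpoint ptree_code (t : ptree) : GenTree.tree nat :=
  let: PNode ts := t in GenTree.Node 0 (map ptree_code ts).

Lemma ptree_code_inj : injective ptree_code.
Proof.
elim/ptree_ind_in => ts IH [us] /= [codeE]; congr PNode.
elim: ts us IH codeE => [|t ts IHts] [|u us] //= IH [tu tsus].
by rewrite (IH t (or_introl erefl) u tu) (IHts us (fun t' H => IH t' (or_intror H))).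
Qed.

HB.instance Definition _ := Equality.copy ptree (inj_type ptree_code_inj).

Fixpoint ctree_code m (c : ctree m) : GenTree.tree nat :=
  let: CNode i cs := c in GenTree.Node i (map (@ctree_code m) cs).

Lemma ctree_code_inj m : injective (@ctree_code m).
Proof.
elim/ctree_ind_in => i cs IH [j ds] /= [/val_inj <- codeE]; congr CNode.
elim: cs ds IH codeE => [|c cs IHcs] [|d ds] //= IH [cd csds].
by rewrite (IH c (or_introl erefl) d cd) (IHcs ds (fun c' H => IH c' (or_intror H))).
Qed.

HB.instance Definition _ m := Equality.copy (ctree m) (inj_type (@ctree_code_inj m)).

Lemma eq_CNode m (i j : 'I_m) cs ds :
  (CNode i cs == CNode j ds) = (i == j) && (cs == ds).
Proof.
by apply/eqP/andP => [[-> ->]|[/eqP -> /eqP ->]].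
Qed.

Lemma InP (T : eqType) (x : T) (s : seq T) : reflect (List.In x s) (x \in s).
Proof.
elim: s => [|y s IHs] /=; first exact: ReflectF.
rewrite in_cons; apply: (iffP orP) => [[/eqP ->|/IHs]|[->|/IHs]]; rewrite ?eqxx; auto.
Qed.

Lemma NoDupP (T : eqType) (s : seq T) : reflect (List.NoDup s) (uniq s).
Proof.
elim: s => [|x s IHs] /=; first by left; constructor.
apply: (iffP andP) => [[/InP x_notin /IHs]|nodup]; first by constructor.
by inversion nodup; split; [apply/InP | apply/IHs].
Qed.

Lemma ctree_ind_mem m (P : ctree m -> Prop) :
  (forall i cs, {in cs, forall c, P c} -> P (CNode i cs)) -> forall c, P c.
Proof. by move=> IH; elim/ctree_ind_in => i cs IHcs; apply: IH => c /InP /IHcs. Qed.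

Section Counting.
Variable T : eqType.
Implicit Types (P : T -> Prop) (s : seq T).

Lemma ncountE P N :
  ncount P N <-> exists s, [/\ uniq s, forall x, P x <-> x \in s & size s = N].
Proof.
split=> -[s]; [case=> /NoDupP s_uniq [sP sN] | case=> /NoDupP s_uniq sP sN].
  by exists s; split=> // x; rewrite sP; split=> /InP.
by exists s; split=> //; split=> // x; rewrite sP; split=> /InP.
Qed.

Lemma ncount_fun P N N' : ncount P N -> ncount P N' -> N = N'.
Proof.
move=> /ncountE[s [s_uniq sP <-]] /ncountE[s' [s'_uniq s'P <-]].
by apply/perm_size/uniq_perm => // x; apply/idP/idP => [/sP/s'P|/s'P/sP].
Qed.

Lemma ncount_ext P P' N : (forall x, P x <-> P' x) -> ncount P N -> ncount P' N.
Proof.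
move=> PP' /ncountE[s [s_uniq sP sN]]; apply/ncountE.
by exists s; split=> // x; rewrite -PP'.
Qed.

Lemma ncount_pred0 P : (forall x, ~ P x) -> ncount P 0.
Proof.
by move=> notP; apply/ncountE; exists [::]; split=> // x; split=> [/notP|] //.
Qed.

Lemma ncount_eq1 (x : T) : ncount (fun y => y = x) 1.
Proof.
apply/ncountE; exists [:: x]; split=> // y.
by rewrite mem_seq1; split=> [->|/eqP].
Qed.

Lemma ncountU P1 P2 N1 N2 : (forall x, P1 x -> ~ P2 x) ->
  ncount P1 N1 -> ncount P2 N2 -> ncount (fun x => P1 x \/ P2 x) (N1 + N2).
Proof.
move=> P12 /ncountE[s1 [s1_uniq s1P <-]] /ncountE[s2 [s2_uniq s2P <-]].
apply/ncountE; exists (s1 ++ s2); split; last exact: size_cat.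
- rewrite cat_uniq s1_uniq s2_uniq /= andbT; apply/hasPn => x /s2P P2x.
  by apply/negP => /s1P /P12.
- by move=> x; rewrite mem_cat s1P s2P; split=> /orP.
Qed.

Lemma ncount_witness P N : 0 < N -> ncount P N -> exists x, P x.
Proof.
move=> N_gt0 /ncountE[[|x s] [_ sP sN]]; first by rewrite -sN in N_gt0.
by exists x; apply/sP; rewrite mem_head.
Qed.

End Counting.

Section Fibers.
Variables (X Y : eqType) (P : X -> Prop) (Q : Y -> Prop) (f : Y -> X) (c : nat).
Hypothesis fQ : forall y, Q y -> P (f y).
Hypothesis fiber_count : forall x, P x -> ncount (fun y => Q y /\ f y = x) c.

Lemma ncount_fibers N : ncount P N -> ncount Q (c * N).
Proof.
case/ncountE=> s [s_uniq sP <-].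
suff count_over (s' : seq X) : uniq s' -> (forall x, x \in s' -> P x) ->
    ncount (fun y => Q y /\ f y \in s') (c * size s').
  apply: ncount_ext (count_over s s_uniq (fun x => (sP x).2)) => y.
  by split=> [[]//|Qy]; split; last apply/sP/fQ.
elim: s' => [|x s' IHs] /=.
  by move=> _ _; rewrite muln0; apply: ncount_pred0 => y [].
case/andP=> x_notin s'_uniq s'P; rewrite mulnS.
have Px : P x by apply: s'P; rewrite mem_head.
have s'P' y : y \in s' -> P y.
  by move=> y_s'; apply: s'P; rewrite in_cons y_s' orbT.
have disj y : Q y /\ f y = x -> ~ (Q y /\ f y \in s').
  by move=> [_ fyx] [_ fy_s']; rewrite -fyx fy_s' in x_notin.
apply: ncount_ext (ncountU disj (fiber_count Px) (IHs s'_uniq s'P')) => y.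
rewrite in_cons; split=> [[[Qy <-]|[Qy fy_s']]|[Qy /orP[/eqP|]]].
- by rewrite eqxx.
- by rewrite fy_s' orbT.
- by left.
- by right.
Qed.

Hypothesis c_gt0 : 0 < c.

Lemma ncount_fibersE M : ncount Q M <-> exists2 N, ncount P N & M = c * N.
Proof.
split=> [QM|[N /ncount_fibers QN ->] //].
have /ncountE[s [_ sQ _]] := QM.
have PN : ncount P (size (undup (map f s))).
  apply/ncountE; exists (undup (map f s)); rewrite undup_uniq; split=> // x.
  rewrite mem_undup; split=> [Px|/mapP[y /sQ Qy ->]]; last exact: fQ.
  have [y [Qy <-]] := ncount_witness c_gt0 (fiber_count Px).
  by apply: map_f; apply/sQ.
by exists (size (undup (map f s))); last exact: ncount_fun QM (ncount_fibers PN).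
Qed.

End Fibers.

Lemma ncount_shape_pairs m (R : ctree m -> Prop) N :
  ncount (fun p : ptree * ctree m => shape p.2 = p.1 /\ R p.2) N <-> ncount R N.
Proof.
have fQ (p : ptree * ctree m) : shape p.2 = p.1 /\ R p.2 -> R p.2 by case.
have fiber1 d : R d ->
    ncount (fun p : ptree * ctree m => (shape p.2 = p.1 /\ R p.2) /\ p.2 = d) 1.
  move=> Rd; apply: ncount_ext (ncount_eq1 (shape d, d)) => -[t d'].
  by rewrite /=; split=> [[-> ->]|[[<- _] ->]].
rewrite (ncount_fibersE fQ fiber1) //.
by split=> [[N' RN' ->]|RN]; [rewrite mul1n | exists N; rewrite ?mul1n].
Qed.

Lemma tcountE m (A : 'M[bool]_m) n N :
  tcount A n N <-> ncount (fun c => nverts (shape c) = n /\ valid A c) N.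
Proof.
rewrite -ncount_shape_pairs; split; apply: ncount_ext => -[t c] /=.
  by split=> [[<- ->]|[<- [-> ->]]].
by split=> [[<- [-> ->]]|[<- ->]].
Qed.

Lemma tcount_rootE m (A : 'M[bool]_m) i n N :
  tcount_root A i n N <->
  ncount (fun c => [/\ nverts (shape c) = n, valid A c & croot c = i]) N.
Proof.
rewrite -ncount_shape_pairs; split; apply: ncount_ext => -[t c] /=.
  by split=> [[<- ->]|[<- [-> ->]]].
by split=> [[<- [-> -> ->]]|[<- -> ->]].
Qed.

Fixpoint choices (T : Type) (ss : seq (seq T)) : seq (seq T) :=
  if ss is s :: ss' then [seq x :: xs | x <- s, xs <- choices ss'] else [:: [::]].

Lemma mem_choices (T : eqType) (ss : seq (seq T)) xs :
  (xs \in choices ss) = all2 (fun x s => x \in s) xs ss.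
Proof.
elim: ss xs => [|s ss IHss] [|x xs] //=.
  by apply/allpairsP => -[[? ?] []].
apply/allpairsP/andP => [[[y ys] /= [y_s ys_ss [-> ->]]]|[x_s xs_ss]].
  by rewrite -IHss.
by exists (x, xs); rewrite /= x_s IHss.
Qed.

Lemma choices_uniq (T : eqType) (ss : seq (seq T)) :
  all uniq ss -> uniq (choices ss).
Proof.
elim: ss => [|s ss IHss] //= /andP[s_uniq ss_uniq].
by apply: allpairs_uniq => // [|[? ?] [? ?] _ _ [-> ->]]; first exact: IHss.
Qed.

Lemma size_choices (T : Type) (ss : seq (seq T)) :
  size (choices ss) = \prod_(s <- ss) size s.
Proof.
by elim: ss => [|s ss IHss]; rewrite ?big_nil ?big_cons //= size_allpairs IHss.
Qed.

Definition node_choices n (xs : seq 'I_n) (dss : seq (seq (ctree n))) : seq (ctree n) :=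
  [seq CNode x ds | x <- xs, ds <- choices dss].

Lemma mem_node_choices n (xs : seq 'I_n) dss y ds :
  (CNode y ds \in node_choices xs dss) = (y \in xs) && (ds \in choices dss).
Proof.
apply/allpairsP/andP => [[[x ds'] /= [x_xs ds'_dss [-> ->]]] //|[y_xs ds_dss]].
by exists (y, ds).
Qed.

Lemma node_choices_uniq n (xs : seq 'I_n) dss :
  uniq xs -> all uniq dss -> uniq (node_choices xs dss).
Proof.
move=> xs_uniq dss_uniq; apply: allpairs_uniq => //; first exact: choices_uniq.
by move=> [? ?] [? ?] _ _ [-> ->].
Qed.

Section Blowup.
Variables m k : nat.
Hypothesis k_gt0 : 0 < k.

Lemma blk_index_subproof (i : 'I_m) (r : 'I_k) : i * k + r < m * k.
Proof.
apply: (@leq_trans (i * k + k)); first by rewrite ltn_add2l.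
by rewrite -mulSnr leq_mul2r ltn_ord orbT.
Qed.

Definition blk_index i r : 'I_(m * k) := Ordinal (blk_index_subproof i r).

Lemma blk_indexK i r : blk (blk_index i r) = i.
Proof. by apply: val_inj; rewrite /= divnMDl // divn_small ?addn0. Qed.

Definition blk_fiber (i : 'I_m) : seq 'I_(m * k) := map (blk_index i) (enum 'I_k).

Lemma mem_blk_fiber i x : (x \in blk_fiber i) = (blk x == i).
Proof.
apply/mapP/eqP => [[r _ ->]|<-]; first exact: blk_indexK.
exists (Ordinal (ltn_pmod x k_gt0)); rewrite ?mem_enum //.
by apply: val_inj; rewrite /= -divn_eq.
Qed.

Lemma blk_fiber_uniq i : uniq (blk_fiber i).
Proof.
rewrite map_inj_uniq ?enum_uniq // => r r' /(congr1 val) /= /addnI.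
exact: val_inj.
Qed.

Fixpoint collapse (d : ctree (m * k)) : ctree m :=
  let: CNode x ds := d in CNode (blk x) (map collapse ds).

Lemma croot_collapse d : croot (collapse d) = blk (croot d).
Proof. by case: d. Qed.

Lemma shape_collapse d : shape (collapse d) = shape d.
Proof.
elim/ctree_ind_in: d => x ds IH /=; congr PNode; rewrite -map_comp.
by apply/eq_in_map => d /InP; exact: IH.
Qed.

Lemma valid_blowup (A : 'M[bool]_m) d : valid (blowup k A) d = valid A (collapse d).
Proof.
elim/ctree_ind_in: d => x ds IH /=; rewrite all_map.
by apply/eq_in_all => d /InP d_ds /=; rewrite mxE croot_collapse IH.
Qed.

Fixpoint lifts (c : ctree m) : seq (ctree (m * k)) :=
  let: CNode i cs := c in node_choices (blk_fiber i) (map lifts cs).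

Lemma liftsE i cs : lifts (CNode i cs) = node_choices (blk_fiber i) (map lifts cs).
Proof. by []. Qed.

Definition rooted_lifts (x : 'I_(m * k)) (c : ctree m) : seq (ctree (m * k)) :=
  let: CNode _ cs := c in node_choices [:: x] (map lifts cs).

Lemma mem_choices_lifts cs ds :
  {in cs, forall c d, (d \in lifts c) = (collapse d == c)} ->
  (ds \in choices (map lifts cs)) = (map collapse ds == cs).
Proof.
rewrite mem_choices; elim: cs ds => [|c cs IHcs] [|d ds] //= memE.
rewrite eqseq_cons memE ?mem_head // IHcs // => c' c'_cs.
by apply: memE; rewrite in_cons c'_cs orbT.
Qed.

Lemma size_choices_lifts cs :
  {in cs, forall c, size (lifts c) = k ^ nverts (shape c)} ->
  size (choices (map lifts cs)) = k ^ sumn (map nverts (map (@shape m) cs)).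
Proof.
move=> sizeE; rewrite size_choices big_map (eq_big_seq _ sizeE) -expn_sum.
by rewrite sumnE !big_map.
Qed.

Lemma mem_lifts c d : (d \in lifts c) = (collapse d == c).
Proof.
elim/ctree_ind_mem: c d => i cs IH [x ds].
by rewrite liftsE mem_node_choices mem_blk_fiber mem_choices_lifts //= eq_CNode.
Qed.

Lemma lifts_uniq c : uniq (lifts c).
Proof.
elim/ctree_ind_mem: c => i cs IH; rewrite liftsE.
by apply: node_choices_uniq; [exact: blk_fiber_uniq | rewrite all_map; apply/allP].
Qed.

Lemma size_lifts c : size (lifts c) = k ^ nverts (shape c).
Proof.
elim/ctree_ind_mem: c => i cs IH.
by rewrite liftsE size_allpairs size_map size_enum_ord size_choices_lifts // -expnS.
Qed.

Lemma mem_rooted_lifts x c d : blk x = croot c ->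
  (d \in rooted_lifts x c) = (croot d == x) && (collapse d == c).
Proof.
case: c d => i cs [y ds] /= blk_x.
rewrite mem_node_choices mem_seq1 eq_CNode (mem_choices_lifts _ (fun c _ => mem_lifts c)).
by case: eqP => // ->; rewrite blk_x eqxx.
Qed.

Lemma rooted_lifts_uniq x c : uniq (rooted_lifts x c).
Proof.
case: c => i cs; apply: node_choices_uniq => //.
by rewrite all_map; apply/allP => c _; exact: lifts_uniq.
Qed.

Lemma size_rooted_lifts x c : size (rooted_lifts x c) = k ^ (nverts (shape c)).-1.
Proof.
case: c => i cs; rewrite size_allpairs mul1n size_choices_lifts //.
by move=> c _; exact: size_lifts.
Qed.

Lemma tcount_blowup (A : 'M[bool]_m) n M :
  tcount (blowup k A) n M <-> exists2 N, tcount A n N & M = k ^ n * N.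
Proof.
have fQ d : nverts (shape d) = n /\ valid (blowup k A) d ->
    nverts (shape (collapse d)) = n /\ valid A (collapse d).
  by rewrite shape_collapse valid_blowup.
have fibers c : nverts (shape c) = n /\ valid A c ->
    ncount (fun d => (nverts (shape d) = n /\ valid (blowup k A) d) /\ collapse d = c)
           (k ^ n).
  case=> c_n A_c; apply/ncountE; exists (lifts c); rewrite lifts_uniq size_lifts c_n.
  split=> // d; rewrite mem_lifts; split=> [[_ ->] //|/eqP dc].
  by rewrite -dc shape_collapse valid_blowup in c_n A_c *.
rewrite tcountE (ncount_fibersE fQ fibers) ?expn_gt0 ?k_gt0 //.
by split=> -[N AN ->]; exists N => //; apply/tcountE.
Qed.

Lemma tcount_root_blowup (A : 'M[bool]_m) x n M :
  tcount_root (blowup k A) x n M <->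
  exists2 N, tcount_root A (blk x) n N & M = k ^ n.-1 * N.
Proof.
have fQ d : [/\ nverts (shape d) = n, valid (blowup k A) d & croot d = x] ->
    [/\ nverts (shape (collapse d)) = n, valid A (collapse d)
      & croot (collapse d) = blk x].
  by rewrite shape_collapse valid_blowup croot_collapse => -[-> -> ->].
have fibers c : [/\ nverts (shape c) = n, valid A c & croot c = blk x] ->
    ncount (fun d => [/\ nverts (shape d) = n, valid (blowup k A) d & croot d = x]
                     /\ collapse d = c) (k ^ n.-1).
  case=> c_n A_c c_x; apply/ncountE; exists (rooted_lifts x c).
  rewrite rooted_lifts_uniq size_rooted_lifts c_n; split=> // d.
  rewrite mem_rooted_lifts //; split=> [[[_ _ ->] ->]|/andP[/eqP d_x /eqP dc]].
    by rewrite !eqxx.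
  by rewrite -dc shape_collapse valid_blowup in c_n A_c *.
rewrite tcount_rootE (ncount_fibersE fQ fibers) ?expn_gt0 ?k_gt0 //.
by split=> -[N AN ->]; exists N => //; apply/tcount_rootE.
Qed.

End Blowup.

Theorem theorem22 (m k : nat) (A B : 'M[bool]_m) :
  1 <= k ->
  [/\ (tc_equiv A B -> tc_equiv (blowup k A) (blowup k B)),
      (strict_tc_equiv A B -> strict_tc_equiv (blowup k A) (blowup k B)) &
      (forall n N, 1 <= n -> tcount A n N -> tcount (blowup k A) n (k ^ n * N))].
Proof.
move=> k_gt0; split.
- move=> AB n n_gt0 M; rewrite !tcount_blowup //.
  by split=> -[N /(AB n n_gt0) AN ->]; exists N.
- move=> AB n n_gt0 x M; rewrite !tcount_root_blowup //.
  by split=> -[N /(AB n n_gt0) AN ->]; exists N.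
- by move=> n N _ AN; apply/tcount_blowup => //; exists N.
Qed.
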